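(* Let $n\ge 2$, let $\sigma,\delta,\tau\in\mathbb{C}$ with $\sigma\tau\ne0$, and suppose the tridiagonal Toeplitz matrix $T=(n;\sigma,\delta,\tau)$ is normal. For $h=1,\dots,n$ let $\widetilde{x}_h$ be a unit right eigenvector of $T$ associated with $\lambda_h=\delta+2\sqrt{\sigma\tau}\cos\frac{h\pi}{n+1}$. Then \[ \kappa(\widetilde{x}_h)= \begin{cases} \left(4|\sigma|\sin\frac{\pi}{2(n+1)}\sin\frac{(2h-1)\pi}{2(n+1)}\right)^{-1}, & 1<h\le\frac n2 \text{ or } h=n,\\[1mm] \left(4|\sigma|\sin\frac{\pi}{2(n+1)}\sin\frac{(2h+1)\pi}{2(n+1)}\right)^{-1}, & h=1 \text{ or } \frac n2<h<n. \end{cases} \] In particular $\kappa(\widetilde{x}_h)$ depends only on $h$, $n$ and $|\sigma|$. Moreover \[ \max_{h=1,\dots,n}\kappa(\widetilde{x}_h)=\left(4|\sigma|\sin\frac{\pi}{2(n+1)}\sin\frac{3\pi}{2(n+1)}\right)^{-1}, \] and this maximum is attained by the eigenvectors associated with the indices $h=1,2,n-1,n$.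
   Context: $T=(n;\sigma,\delta,\tau)$ is the $n\times n$ tridiagonal Toeplitz matrix with diagonal $\delta$, superdiagonal $\tau$, subdiagonal $\sigma$; for $\sigma\tau\ne0$ its eigenvalues $\lambda_h=\delta+2\sqrt{\sigma\tau}\cos\frac{h\pi}{n+1}$ are simple. Eigenvector condition number: for $A\in\mathbb{C}^{n\times n}$ and a unit eigenvector $x$ associated with a simple eigenvalue $\mu$, let $U\in\mathbb{C}^{n\times(n-1)}$ have orthonormal columns spanning $\mathrm{Range}(A-\mu I)$; then $\kappa(x)=\|(\mu I-U^HAU)^{-1}\|_2$ (the condition number of the one-dimensional invariant subspace spanned by $x$). *)

From HB Require Import structures.
From mathcomp Require Import all_boot all_order all_algebra.
From mathcomp Require Import all_classical all_reals.
From mathcomp Require Import trigo.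
From mathcomp Require Import complex.
Set Implicit Arguments. Unset Strict Implicit. Unset Printing Implicit Defensive.
Import Order.TTheory GRing.Theory Num.Theory.
Local Open Scope ring_scope.
Local Open Scope complex_scope.

Section Defs.
Variable R : realType.

Definition cabs (z : R[i]) : R := ComplexField.Normc.normc z.

Definition ctr (m n : nat) (A : 'M[R[i]]_(m, n)) : 'M[R[i]]_(n, m) :=
  (map_mx (@conjc R) A)^T.

Definition vnorm2 (n : nat) (v : 'cV[R[i]]_n) : R :=
  Num.sqrt (\sum_(i < n) cabs (v i 0) ^+ 2).

Definition specnorm (m n : nat) (M : 'M[R[i]]_(m, n)) : R :=
  sup [set vnorm2 (M *m x) | x in [set x : 'cV[R[i]]_n | vnorm2 x = 1]]%classic.

Definition normal_mx (n : nat) (A : 'M[R[i]]_n) : Prop :=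
  A *m ctr A = ctr A *m A.

Definition orthonormal_cols (m n : nat) (U : 'M[R[i]]_(m, n)) : Prop :=
  ctr U *m U = 1%:M.

(* the column space of U equals the range of B *)
Definition same_range (m n p : nat) (U : 'M[R[i]]_(m, n)) (B : 'M[R[i]]_(m, p)) : bool :=
  (U^T == B^T)%MS.

(* Condition number of the one-dimensional invariant subspace spanned by a unit
   eigenvector associated with the simple eigenvalue mu of A, computed with a matrix U
   whose orthonormal columns span Range(A - mu I):  ||(mu I - U^H A U)^{-1}||_2. *)
Definition kappa (n : nat) (A : 'M[R[i]]_n) (mu : R[i]) (U : 'M[R[i]]_(n, n.-1)) : R :=
  specnorm (invmx (mu%:M - ctr U *m A *m U)).

Definition kbound (n : nat) (sigma : R[i]) (k : nat) : R :=
  (4%:R * cabs sigma * sin (pi / (2 * n.+1)%:R) * sin (k%:R * pi / (2 * n.+1)%:R))^-1.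

Definition tridiag_toeplitz (n : nat) (sigma delta tau : R[i]) : 'M[R[i]]_n :=
  \matrix_(i, j) (if i == j :> nat then delta
                  else if j == i.+1 :> nat then tau
                  else if i == j.+1 :> nat then sigma else 0).

Definition ttoep_eig (n : nat) (delta s : R[i]) (h : nat) : R[i] :=
  delta + 2%:R * s * (cos (h%:R * pi / (n.+1)%:R))%:C.

End Defs.

From HB Require Import structures.
From mathcomp Require Import all_boot all_order all_algebra.
From mathcomp Require Import all_classical all_reals.
From mathcomp Require Import trigo.
From mathcomp Require Import complex.
From mathcomp Require Import ring lra zify.
Set Implicit Arguments. Unset Strict Implicit. Unset Printing Implicit Defensive.
Import Order.TTheory GRing.Theory Num.Theory.
Local Open Scope ring_scope.
Local Open Scope complex_scope.

(* A normal matrix is unitarily diagonalisable, T Q = Q D.  The columns of U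
   span Range(T - mu I), i.e. the eigen-coordinates with index different from h, and
   U (mu I - U^H T U) = (mu I - T) U; in eigen-coordinates mu I - T is diagonal with
   entries mu - lambda_j.  Hence mu I - U^H T U is bounded below by
   d = min_{j <> h} |lambda_h - lambda_j|, with equality on the eigenvector of a
   nearest eigenvalue, so kappa = 1 / d.
   For T = (n; sigma, delta, tau), normality forces |sigma| = |tau|, so |s| = |sigma|
   for s^2 = sigma tau.  The eigenvalues are delta + 2 s cos(j pi/(n+1)); the cosines
   decrease, so the nearest eigenvalue is a neighbour, and
   cos(m t) - cos((m+1) t) = 2 sin(pi/(2(n+1))) sin((2m+1) pi/(2(n+1))).  The second
   difference equals 2 cos(h t) (cos t - 1), so the left gap is the smaller one exactly
   when cos(h t) >= 0, which yields the two cases.  The maximum comes from sin being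
   smallest near the ends of (0, pi). *)

Section ComplexMatrices.
Variable R : realType.
Local Notation C := R[i].

Lemma cabs_ge0 (z : C) : 0 <= cabs z.
Proof. by case: z => a b; apply: sqrtr_ge0. Qed.

Lemma cabs0 : cabs (0 : C) = 0.
Proof. exact: ComplexField.Normc.normc0. Qed.

Lemma cabsM (z w : C) : cabs (z * w) = cabs z * cabs w.
Proof. exact: ComplexField.Normc.normcM. Qed.

Lemma cabs_real (r : R) : cabs r%:C = `|r|.
Proof. by apply: complexI; rewrite /cabs /= expr0n addr0 sqrtr_sqr. Qed.

Lemma cabs_eq0 (z : C) : (cabs z == 0) = (z == 0).
Proof.
apply/eqP/eqP => [/ComplexField.Normc.eq0_normc //|->]; exact: cabs0.
Qed.

Lemma cabs_gt0 (z : C) : (0 < cabs z) = (z != 0).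
Proof. by rewrite lt_def cabs_eq0 cabs_ge0 andbT. Qed.

Lemma sqr_cabs (z : C) : (cabs z ^+ 2)%:C = z * conjc z.
Proof. by rewrite -sqr_normc rmorphXn. Qed.

Lemma ctrK m n (A : 'M[C]_(m, n)) : ctr (ctr A) = A.
Proof. by apply/matrixP => i j; rewrite !mxE conjcK. Qed.

Lemma ctrM m n p (A : 'M[C]_(m, n)) (B : 'M[C]_(n, p)) :
  ctr (A *m B) = ctr B *m ctr A.
Proof. by rewrite /ctr map_mxM trmx_mul. Qed.

Lemma ctrB m n (A B : 'M[C]_(m, n)) : ctr (A - B) = ctr A - ctr B.
Proof. by rewrite /ctr map_mxB linearB. Qed.

Lemma ctrZ m n a (A : 'M[C]_(m, n)) : ctr (a *: A) = conjc a *: ctr A.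
Proof. by rewrite /ctr map_mxZ linearZ. Qed.

Lemma ctr_scalar n a : ctr (a%:M : 'M[C]_n) = (conjc a)%:M.
Proof.
by apply/matrixP => i j; rewrite !mxE eq_sym; case: eqP; rewrite ?conjc0.
Qed.

Definition sqnorm n (v : 'cV[C]_n) : R := \sum_(i < n) cabs (v i 0) ^+ 2.

Lemma vnorm2E n (v : 'cV[C]_n) : vnorm2 v = Num.sqrt (sqnorm v).
Proof. by []. Qed.

Lemma sqnorm_ge0 n (v : 'cV[C]_n) : 0 <= sqnorm v.
Proof. by apply: sumr_ge0 => i _; rewrite sqr_ge0. Qed.

Lemma sqnormE n (v : 'cV[C]_n) : (sqnorm v)%:C = (ctr v *m v) 0 0.
Proof.
rewrite rmorph_sum !mxE; apply: eq_bigr => i _.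
by rewrite !mxE mulrC -sqr_cabs.
Qed.

Lemma sqnorm_eq0 n (v : 'cV[C]_n) : (sqnorm v == 0) = (v == 0).
Proof.
apply/idP/eqP => [|->]; last by rewrite /sqnorm big1 // => i _; rewrite mxE cabs0 expr0n.
rewrite psumr_eq0 => [/allP v0|i _]; last by rewrite sqr_ge0.
apply/matrixP => i j; rewrite (ord1 j) mxE; apply/eqP.
by have /= := v0 i (mem_index_enum _); rewrite sqrf_eq0 cabs_eq0.
Qed.

Lemma sqnormZ n a (v : 'cV[C]_n) : sqnorm (a *: v) = cabs a ^+ 2 * sqnorm v.
Proof.
by rewrite /sqnorm mulr_sumr; apply: eq_bigr => i _; rewrite mxE cabsM exprMn.
Qed.

Lemma sqnorm_delta n (j : 'I_n) : sqnorm (delta_mx j 0 : 'cV[C]_n) = 1.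
Proof.
rewrite /sqnorm (bigD1 j) //= big1 ?addr0 => [|i /negPf ij]; rewrite mxE.
  by rewrite !eqxx /= expr1n expr0n addr0 sqrtr1 expr1n.
by rewrite ij mulr0n cabs0 expr0n.
Qed.

Lemma sqnorm_isometry m p (U : 'M[C]_(m, p)) (z : 'cV[C]_p) :
  ctr U *m U = 1%:M -> sqnorm (U *m z) = sqnorm z.
Proof.
by move=> UU; apply: complexI; rewrite !sqnormE ctrM -mulmxA (mulmxA (ctr U)) UU mul1mx.
Qed.

Lemma same_rangeP m p q (U : 'M[C]_(m, p)) (A : 'M[C]_(m, q)) :
  same_range U A -> (exists X, A = U *m X) /\ (exists Y, U = A *m Y).
Proof.
case/andP=> /submxP [Y UY] /submxP [X AX]; split.
  by exists X^T; rewrite -(trmxK A) AX trmx_mul trmxK.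
by exists Y^T; rewrite -(trmxK U) UY trmx_mul trmxK.
Qed.

End ComplexMatrices.

Section SpectralNorm.
Variable R : realType.
Local Notation C := R[i].

Lemma specnorm_eq m n (M : 'M[C]_(m, n)) c :
  (forall x, vnorm2 x = 1 -> vnorm2 (M *m x) <= c) ->
  (exists2 x, vnorm2 x = 1 & vnorm2 (M *m x) = c) -> specnorm M = c.
Proof.
move=> ub [x0 x0_unit Mx0].
have ub_c : ubound [set vnorm2 (M *m x) | x in [set x | vnorm2 x = 1]]%classic c.
  by move=> r [x x_unit <-]; apply: ub.
apply/le_anti/andP; split; first by apply: ge_sup => //; exists c, x0.
by apply: ub_le_sup; [exists c | exists x0].
Qed.

Lemma bounded_below_unitmx n (B : 'M[C]_n) d :
  0 < d -> (forall z, d ^+ 2 * sqnorm z <= sqnorm (B *m z)) -> B \in unitmx.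
Proof.
move=> d_gt0 B_ge; rewrite unitmxE unitfE -det_tr; apply/negP => /det0P [v v0 vB].
have Bv : B *m v^T = 0 by rewrite -(trmxK B) -trmx_mul vB trmx0.
have := B_ge v^T; rewrite Bv.
have /eqP -> : sqnorm (0 : 'cV[C]_n) == 0 by rewrite sqnorm_eq0.
rewrite pmulr_rle0 ?exprn_gt0 // => v_le0.
by move: v0; rewrite -trmx_eq0 -sqnorm_eq0 eq_le v_le0 sqnorm_ge0.
Qed.

Lemma specnorm_invmx n (B : 'M[C]_n) d z0 :
  0 < d -> (forall z, d ^+ 2 * sqnorm z <= sqnorm (B *m z)) ->
  sqnorm z0 = 1 -> sqnorm (B *m z0) = d ^+ 2 -> specnorm (invmx B) = d^-1.
Proof.
move=> d_gt0 B_ge z0_unit Bz0; have B_unit := bounded_below_unitmx d_gt0 B_ge.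
have d2_gt0 : 0 < d ^+ 2 by exact: exprn_gt0.
have dV_ge0 : 0 <= d^-1 by rewrite invr_ge0 ltW.
apply: specnorm_eq => [x|].
  rewrite !vnorm2E => /(congr1 (fun r => r ^+ 2)).
  rewrite expr1n sqr_sqrtr ?sqnorm_ge0 // => x_unit.
  have := B_ge (invmx B *m x); rewrite mulKVmx // x_unit => le1.
  rewrite -(ger0_norm dV_ge0) -sqrtr_sqr ler_sqrt ?sqr_ge0 //.
  by rewrite exprVn -(ler_pM2l d2_gt0) mulfV ?gt_eqF.
exists ((d^-1)%:C *: (B *m z0)).
  by rewrite vnorm2E sqnormZ Bz0 cabs_real ger0_norm // exprVn mulVf ?gt_eqF ?sqrtr1.
rewrite -scalemxAr mulKmx // vnorm2E sqnormZ z0_unit mulr1 cabs_real sqrtr_sqr.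
by rewrite normr_id ger0_norm.
Qed.

End SpectralNorm.

Section NormalMatrices.
Variable R : realType.
Local Notation C := R[i].

Lemma normal_mx_shift n (A : 'M[C]_n) a : normal_mx A -> normal_mx (A - a%:M).
Proof.
rewrite /normal_mx ctrB ctr_scalar !mulmxBl !mulmxBr !mul_mx_scalar !mul_scalar_mx => ->.
rewrite !scale_scalar_mx mulrC !opprB -!addrA; congr (_ + _).
by rewrite addrCA [RHS]addrCA; congr (_ + _); apply: addrC.
Qed.

Lemma normal_mx_ker_ctr n (M : 'M[C]_n) (v : 'cV[C]_n) :
  normal_mx M -> M *m v = 0 -> ctr M *m v = 0.
Proof.
move=> M_normal Mv; apply/eqP; rewrite -sqnorm_eq0; apply/eqP/complexI.
rewrite sqnormE ctrM ctrK mulmxA -(mulmxA (ctr v)) M_normal mulmxA.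
by rewrite -mulmxA Mv mulmx0 mxE.
Qed.

Lemma normal_eigvec_ctr n (A : 'M[C]_n) (v : 'cV[C]_n) lam :
  normal_mx A -> A *m v = lam *: v -> ctr A *m v = conjc lam *: v.
Proof.
move=> A_normal Av; apply/eqP; rewrite -subr_eq0; apply/eqP.
have := normal_mx_ker_ctr (normal_mx_shift lam A_normal) (v := v).
by rewrite ctrB ctr_scalar !mulmxBl !mul_scalar_mx Av subrr; apply.
Qed.

Lemma normal_eigvec_orth n (A : 'M[C]_n) (u w : 'cV[C]_n) a b :
  normal_mx A -> A *m u = a *: u -> A *m w = b *: w -> a != b -> ctr u *m w = 0.
Proof.
move=> A_normal Au Aw ab.
have uAw_r : ctr u *m (A *m w) = b *: (ctr u *m w) by rewrite Aw scalemxAr.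
have uAw_l : ctr u *m (A *m w) = a *: (ctr u *m w).
  rewrite mulmxA -[ctr u *m A]ctrK ctrM ctrK (normal_eigvec_ctr A_normal Au).
  by rewrite ctrZ conjcK scalemxAl.
have /eqP : (b - a) *: (ctr u *m w) = 0 by rewrite scalerBl -uAw_l -uAw_r subrr.
by rewrite scaler_eq0 subr_eq0 eq_sym (negPf ab) => /eqP.
Qed.

Lemma orthonormal_eigenbasis_diag n (A : 'M[C]_n) (u : 'I_n -> 'cV[C]_n)
    (lam : 'I_n -> C) :
  (forall k, sqnorm (u k) = 1) -> (forall k l, k != l -> ctr (u k) *m u l = 0) ->
  (forall k, A *m u k = lam k *: u k) ->
  exists Q : 'M[C]_n, ctr Q *m Q = 1%:M /\ A *m Q = Q *m diag_mx (\row_k lam k).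
Proof.
move=> u_unit u_orth Au; exists (\matrix_(i, k) u k i 0); split.
  apply/matrixP => k l.
  have -> : (ctr (\matrix_(i, k) u k i 0) *m \matrix_(i, k) u k i 0) k l
            = (ctr (u k) *m u l) 0 0.
    by rewrite !mxE; apply: eq_bigr => i _; rewrite !mxE.
  rewrite [RHS]mxE; have [->|kl] := eqVneq k l; first by rewrite -sqnormE u_unit.
  by rewrite u_orth // mxE.
apply/matrixP => i l; rewrite mul_mx_diag !mxE.
have -> : \sum_j A i j * (\matrix_(i, k) u k i 0) j l = (A *m u l) i 0.
  by rewrite !mxE; apply: eq_bigr => j _; rewrite !mxE.
by rewrite Au !mxE mulrC.
Qed.

Lemma normal_unitary_diag n (A : 'M[C]_n) (v : 'I_n -> 'cV[C]_n) (lam : 'I_n -> C) :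
  normal_mx A -> injective lam -> (forall k, v k != 0) ->
  (forall k, A *m v k = lam k *: v k) ->
  exists Q : 'M[C]_n, ctr Q *m Q = 1%:M /\ A *m Q = Q *m diag_mx (\row_k lam k).
Proof.
move=> A_normal lam_inj v_neq0 Av.
pose u k := ((Num.sqrt (sqnorm (v k)))^-1)%:C *: v k.
have Au k : A *m u k = lam k *: u k by rewrite -scalemxAr Av !scalerA mulrC.
apply: (@orthonormal_eigenbasis_diag _ _ u) => // [k|k l kl].
  rewrite sqnormZ cabs_real ger0_norm ?invr_ge0 ?sqrtr_ge0 //.
  by rewrite exprVn sqr_sqrtr ?sqnorm_ge0 // mulVf ?sqnorm_eq0.
by apply: (normal_eigvec_orth A_normal (Au k) (Au l)); apply: contra_neq kl => /lam_inj.
Qed.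

End NormalMatrices.

Section Compression.
Variable R : realType.
Local Notation C := R[i].
Variables (n : nat) (T Q : 'M[C]_n) (lam : 'I_n -> C) (i0 : 'I_n) (U : 'M[C]_(n, n.-1)).
Hypotheses (Q_unitary : ctr Q *m Q = 1%:M)
  (TQ : T *m Q = Q *m diag_mx (\row_j lam j))
  (U_orth : orthonormal_cols U) (U_range : same_range U (T - (lam i0)%:M)).

Local Notation mu := (lam i0).
Local Notation B := (mu%:M - ctr U *m T *m U).

Lemma ctrQ_isometry (w : 'cV[C]_n) : sqnorm (ctr Q *m w) = sqnorm w.
Proof. by apply: sqnorm_isometry; rewrite ctrK; apply: mulmx1C. Qed.

Lemma ctrQ_diag : ctr Q *m T = diag_mx (\row_j lam j) *m ctr Q.
Proof.
rewrite -[ctr Q *m T]mulmx1 -(mulmx1C Q_unitary) mulmxA -(mulmxA (ctr Q) T Q) TQ.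
by rewrite mulmxA Q_unitary mul1mx.
Qed.

Lemma compression_mul : U *m B = (mu%:M - T) *m U.
Proof.
have [[X TX] _] := same_rangeP U_range.
have TU : T *m U = U *m (X *m U + mu%:M).
  by rewrite mulmxDr mul_mx_scalar mulmxA -TX mulmxBl mul_scalar_mx subrK.
rewrite mulmxBr mul_mx_scalar mulmxBl mul_scalar_mx -mulmxA TU mulmxA U_orth.
by rewrite mul1mx.
Qed.

Lemma range_coord_i0 (z : 'cV[C]_n.-1) : (ctr Q *m (U *m z)) i0 0 = 0.
Proof.
have [_ [Y UY]] := same_rangeP U_range.
rewrite UY -mulmxA mulmxA mulmxBr ctrQ_diag mul_mx_scalar mulmxBl -scalemxAl.
by rewrite -mulmxA mul_diag_mx !mxE subrr.
Qed.

Lemma coord_shift (w : 'cV[C]_n) j :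
  (ctr Q *m ((mu%:M - T) *m w)) j 0 = (mu - lam j) * (ctr Q *m w) j 0.
Proof.
rewrite mulmxA mulmxBr mul_mx_scalar ctrQ_diag mulmxBl -scalemxAl -mulmxA.
by rewrite mul_diag_mx !mxE mulrBl.
Qed.

Lemma compression_bounded_below d :
  0 <= d -> (forall j, j != i0 -> d <= cabs (mu - lam j)) ->
  forall z, d ^+ 2 * sqnorm z <= sqnorm (B *m z).
Proof.
move=> d_ge0 gap z.
rewrite -(sqnorm_isometry z U_orth) -(sqnorm_isometry (B *m z) U_orth) mulmxA.
rewrite compression_mul -mulmxA -(ctrQ_isometry (U *m z)).
rewrite -(ctrQ_isometry ((mu%:M - T) *m (U *m z))).
rewrite /sqnorm mulr_sumr; apply: ler_sum => j _; rewrite coord_shift cabsM exprMn.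
have [->|ji0] := eqVneq j i0; first by rewrite range_coord_i0 cabs0 expr0n !mulr0.
by rewrite ler_wpM2r ?sqr_ge0 // lerXn2r ?nnegrE ?cabs_ge0 ?gap.
Qed.

Lemma compression_attained j : lam j != mu ->
  exists2 z, sqnorm z = 1 & sqnorm (B *m z) = cabs (mu - lam j) ^+ 2.
Proof.
move=> lam_j; pose w := Q *m (delta_mx j 0 : 'cV[C]_n).
have Tw : T *m w = lam j *: w.
  rewrite mulmxA TQ -mulmxA scalemxAr; congr (_ *m _).
  apply/matrixP => i k; rewrite mul_diag_mx !mxE (ord1 k).
  by have [->|ij] := eqVneq i j; rewrite ?(negPf ij) ?mulr0.
have [[X TX] _] := same_rangeP U_range.
set z := X *m ((lam j - mu)^-1 *: w).
have Uz : U *m z = w.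
  rewrite mulmxA -TX -scalemxAr mulmxBl Tw mul_scalar_mx -scalerBl scalerA.
  by rewrite mulVf ?subr_eq0 // scale1r.
exists z; first by rewrite -(sqnorm_isometry z U_orth) Uz sqnorm_isometry ?sqnorm_delta.
rewrite -(sqnorm_isometry _ U_orth) mulmxA compression_mul -mulmxA Uz.
by rewrite mulmxBl Tw mul_scalar_mx -scalerBl sqnormZ sqnorm_isometry ?sqnorm_delta ?mulr1.
Qed.

Theorem kappa_normal_min_gap d :
  0 < d -> (forall j, j != i0 -> d <= cabs (mu - lam j)) ->
  (exists2 j, j != i0 & cabs (mu - lam j) = d) -> kappa T mu U = d^-1.
Proof.
move=> d_gt0 gap [j ji0 dj].
have lam_j : lam j != mu.
  by apply: contraTneq d_gt0 => lam_j; rewrite -dj lam_j subrr cabs0 ltxx.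
have [z z_unit Bz] := compression_attained lam_j.
apply: (specnorm_invmx d_gt0 (compression_bounded_below (ltW d_gt0) gap) z_unit).
by rewrite Bz dj.
Qed.

End Compression.

Section MultiplesOfPiFraction.
Variable R : realType.

Lemma sin_nat_mulpi (j : nat) : sin (j%:R * pi) = 0 :> R.
Proof. by rewrite mulr_natl -[_ *+ j]add0r (alternatingn (@sinDpi R)) sin0 mulr0. Qed.

Lemma sin_mulSS (x : R) (i : nat) :
  sin (i.+2%:R * x) = 2 * cos x * sin (i.+1%:R * x) - sin (i%:R * x).
Proof.
have -> : i.+2%:R * x = i.+1%:R * x + x by rewrite -addn1 natrD mulrDl mul1r.
have -> : i%:R * x = i.+1%:R * x - x by rewrite -addn1 natrD mulrDl mul1r addrK.
by rewrite sinD sinB; ring.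
Qed.

Lemma mulpi_frac_ge0_lepi (a N : nat) :
  (a <= N)%N -> (0 < N)%N -> 0 <= a%:R * @pi R / N%:R <= pi.
Proof.
move=> aN N_gt0; rewrite divr_ge0 ?mulr_ge0 ?pi_ge0 //=.
by rewrite ler_pdivrMr ?ltr0n // mulrC ler_wpM2l ?pi_ge0 // ler_nat.
Qed.

Lemma mulpi_frac_gt0_ltpi (a N : nat) :
  (0 < a)%N -> (a < N)%N -> 0 < a%:R * @pi R / N%:R < pi.
Proof.
move=> a_gt0 aN; have N_gt0 : (0 < N)%N by apply: leq_ltn_trans aN.
rewrite divr_gt0 ?mulr_gt0 ?ltr0n ?pi_gt0 //=.
by rewrite ltr_pdivrMr ?ltr0n // mulrC ltr_pM2l ?pi_gt0 // ltr_nat.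
Qed.

Lemma sin_mulpi_frac_gt0 (l N : nat) : (0 < l < N)%N ->
  0 < sin (l%:R * pi / N%:R) :> R.
Proof. by case/andP=> l_gt0 lN; apply: sin_gt0_pi; apply: mulpi_frac_gt0_ltpi. Qed.

Lemma sin_pi_frac_gt0 (N : nat) : (1 < N)%N -> 0 < sin (pi / N%:R) :> R.
Proof. by move=> N_gt1; have := @sin_mulpi_frac_gt0 1 N; rewrite mul1r; apply. Qed.

Lemma mulpi_frac_le_pihalf (a N : nat) : (2 * a <= N)%N ->
  a%:R * pi / N%:R <= pi / 2 :> R.
Proof.
move=> aN; have [->|N_gt0] := posnP N; first by rewrite invr0 mulr0; have := pi_gt0 R; lra.
have aN' : 2 * a%:R <= N%:R :> R by rewrite -natrM ler_nat.
by rewrite ler_pdivrMr ?ltr0n //; have := pi_gt0 R; nra.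
Qed.

Lemma pihalf_le_mulpi_frac (a N : nat) : (0 < N)%N -> (N <= 2 * a)%N ->
  pi / 2 <= a%:R * pi / N%:R :> R.
Proof.
move=> N_gt0 aN; have aN' : N%:R <= 2 * a%:R :> R by rewrite -natrM ler_nat.
by rewrite ler_pdivlMr ?ltr0n //; have := pi_gt0 R; nra.
Qed.

Lemma mulpi_frac_in_pihalf (a N : nat) : (2 * a <= N)%N ->
  a%:R * pi / N%:R \in `[- (pi / 2), pi / 2 :> R].
Proof.
move=> aN; rewrite in_itv /= mulpi_frac_le_pihalf // andbT.
rewrite (le_trans _ (divr_ge0 (mulr_ge0 (ler0n _ _) (pi_ge0 R)) (ler0n _ _))) //.
by rewrite oppr_le0 divr_ge0 ?pi_ge0.
Qed.

Lemma ler_cos (x y : R) : x \in `[0, pi] -> y \in `[0, pi] ->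
  (cos y <= cos x) = (x <= y).
Proof.
move=> xD yD; rewrite !le_eqVlt ltr_cos //; congr (_ || _).
by apply/eqP/eqP => [/(cos_inj yD xD)|] ->.
Qed.

Lemma ler_sin (x y : R) :
  x \in `[- (pi / 2), pi / 2] -> y \in `[- (pi / 2), pi / 2] ->
  (sin x <= sin y) = (x <= y).
Proof.
move=> xD yD; rewrite !le_eqVlt ltr_sin //; congr (_ || _).
by apply/eqP/eqP => [/(sin_inj xD yD)|] ->.
Qed.

Lemma cos_mulpi_frac_inj (a b N : nat) : (a <= N)%N -> (b <= N)%N -> (0 < N)%N ->
  cos (a%:R * pi / N%:R) = cos (b%:R * pi / N%:R) :> R -> a = b.
Proof.
move=> aN bN N_gt0 /cos_inj; rewrite !in_itv /= !mulpi_frac_ge0_lepi // => /(_ isT isT).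
move/(mulIf _)/(mulIf _); rewrite invr_eq0 pnatr_eq0 -lt0n N_gt0 gt_eqF ?pi_gt0 //.
by move=> /(_ isT isT) /eqP; rewrite eqr_nat => /eqP.
Qed.

Lemma cos_mulpi_frac_nonincr (i j N : nat) : (0 < N)%N -> (i <= j <= N)%N ->
  cos (j%:R * pi / N%:R) <= cos (i%:R * pi / N%:R) :> R.
Proof.
move=> N_gt0 /andP [ij jN].
rewrite ler_cos ?in_itv /=; last 2 first.
- exact: (mulpi_frac_ge0_lepi (leq_trans ij jN) N_gt0).
- exact: (mulpi_frac_ge0_lepi jN N_gt0).
by rewrite !ler_pM2r ?invr_gt0 ?ltr0n ?pi_gt0 // ler_nat.
Qed.

Lemma cos_mulpi_frac_ge0 (a N : nat) : (2 * a <= N)%N ->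
  0 <= cos (a%:R * pi / N%:R) :> R.
Proof.
by move=> aN; rewrite cos_ge0_pihalf //; have := mulpi_frac_in_pihalf aN; rewrite in_itv.
Qed.

Lemma cos_mulpi_frac_le0 (a N : nat) : (0 < N)%N -> (N <= 2 * a)%N -> (a <= N)%N ->
  cos (a%:R * pi / N%:R) <= 0 :> R.
Proof.
move=> N_gt0 Na aN; rewrite -cos_pihalf ler_cos ?pihalf_le_mulpi_frac // in_itv /=.
  by rewrite divr_ge0 ?pi_ge0 //=; have := pi_gt0 R; lra.
exact: mulpi_frac_ge0_lepi.
Qed.

Lemma sin_mulpi_frac_reflect (k N : nat) : (k <= N)%N ->
  sin ((N - k)%:R * pi / N%:R) = sin (k%:R * pi / N%:R) :> R.
Proof.
move=> kN; have [N0|N_gt0] := posnP N; first by move: kN; rewrite N0 leqn0 => /eqP ->.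
have -> : (N - k)%:R * pi / N%:R = pi - k%:R * pi / N%:R :> R.
  by rewrite natrB //; field; rewrite pnatr_eq0 -lt0n.
by rewrite sinB sinpi cospi mul0r sub0r mulN1r opprK.
Qed.

Lemma sin_mulpi_frac_le (i j N : nat) : (i <= j)%N -> (i + j <= N)%N ->
  sin (i%:R * pi / N%:R) <= sin (j%:R * pi / N%:R) :> R.
Proof.
have sin_mono k l : (k <= l)%N -> (2 * l <= N)%N ->
    sin (k%:R * pi / N%:R) <= sin (l%:R * pi / N%:R) :> R.
  move=> kl lN; have kN : (2 * k <= N)%N by rewrite (leq_trans _ lN) ?leq_mul2l ?kl ?orbT.
  rewrite ler_sin ?mulpi_frac_in_pihalf //.
  by rewrite ler_wpM2r ?invr_ge0 ?ler0n // ler_wpM2r ?pi_ge0 // ler_nat.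
move=> ij ijN; have [jN|jN] := leqP (2 * j) N; first exact: sin_mono.
by rewrite -(@sin_mulpi_frac_reflect j N) ?sin_mono //; lia.
Qed.

End MultiplesOfPiFraction.

Section TridiagToeplitzSpectrum.
Variable R : realType.
Local Notation C := R[i].

Lemma tridiag_toeplitz_mul_col n (sigma delta tau : C) (g : nat -> C) (i : 'I_n) :
  g 0%N = 0 -> g n.+1 = 0 ->
  (tridiag_toeplitz n sigma delta tau *m \col_k g k.+1) i 0
  = sigma * g i + delta * g i.+1 + tau * g i.+2.
Proof.
move=> g0 gn1.
have entry (l : 'I_n) : tridiag_toeplitz n sigma delta tau i l * (\col_k g k.+1) l 0
    = (if l == i.-1 :> nat then sigma * g i else 0)
    + (if l == i :> nat then delta * g i.+1 else 0)
    + (if l == i.+1 :> nat then tau * g i.+2 else 0).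
  rewrite !mxE; move: (nat_of_ord l) (nat_of_ord i) => a [|b] /=;
    by do ![case: eqP => ?]; subst; rewrite ?g0 ?mul0r ?mulr0 ?addr0 ?add0r //; lia.
rewrite mxE (eq_bigr _ (fun l _ => entry l)) !big_split /= -!big_mkcond /=.
rewrite (big_ord1_eq _ (fun _ => sigma * g i)) (big_ord1_eq _ (fun _ => delta * g i.+1)).
rewrite (big_ord1_eq _ (fun _ => tau * g i.+2)) ltn_ord (leq_ltn_trans (leq_pred i)) //.
case: ltnP => // i_last; have -> : i.+2 = n.+1 by move: (ltn_ord i) i_last; lia.
by rewrite gn1 mulr0.
Qed.

(* With [s ^+ 2 = sigma * tau], [(s / tau) ^+ k] is the factor [(sigma / tau) ^ (k / 2)]
   of the classical eigenvectors of tridiagonal Toeplitz matrices. *)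
Definition ttoep_evec_entry (s tau : C) (n j k : nat) : C :=
  (s / tau) ^+ k * (sin (k%:R * (j%:R * pi / n.+1%:R)))%:C.

Definition ttoep_evec (s tau : C) (n j : nat) : 'cV[C]_n :=
  \col_k ttoep_evec_entry s tau n j k.+1.

Lemma ttoep_evec_eig n (sigma delta tau s : C) j :
  tau != 0 -> s ^+ 2 = sigma * tau ->
  tridiag_toeplitz n sigma delta tau *m ttoep_evec s tau n j
  = ttoep_eig n delta s j *: ttoep_evec s tau n j.
Proof.
move=> tau0 s2; apply/matrixP => i k; rewrite (ord1 k) tridiag_toeplitz_mul_col.
- rewrite !mxE /ttoep_evec_entry /ttoep_eig -mulrA sin_mulSS.
  have -> : sigma = s ^+ 2 / tau by rewrite s2 mulfK.
  by rewrite rmorphB !rmorphM rmorph_nat !exprS; field.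
- by rewrite /ttoep_evec_entry mul0r sin0 mulr0.
by rewrite /ttoep_evec_entry (mulrC n.+1%:R) mulfVK ?pnatr_eq0 // sin_nat_mulpi mulr0.
Qed.

Lemma ttoep_evec_neq0 n (s tau : C) j : s != 0 -> tau != 0 -> (0 < n)%N ->
  (0 < j <= n)%N -> ttoep_evec s tau n j != 0.
Proof.
move=> s0 tau0 n_gt0 /andP [j_gt0 jn]; apply/negP => /eqP/matrixP/(_ (Ordinal n_gt0) 0).
rewrite !mxE /ttoep_evec_entry mul1r expr1 => /eqP; apply/negP.
by rewrite !mulf_neq0 ?invr_eq0 // fmorph_eq0 gt_eqF // sin_gt0_pi // mulpi_frac_gt0_ltpi.
Qed.

Lemma ttoep_eig_inj n (delta s : C) a b : s != 0 ->
  (a <= n.+1)%N -> (b <= n.+1)%N -> ttoep_eig n delta s a = ttoep_eig n delta s b -> a = b.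
Proof.
move=> s0 an bn /addrI/mulfI; rewrite mulf_neq0 ?pnatr_eq0 // => /(_ isT) /complexI.
exact: cos_mulpi_frac_inj.
Qed.

Lemma normal_ttoep_unitary_diag n (sigma delta tau s : C) :
  sigma * tau != 0 -> s ^+ 2 = sigma * tau ->
  normal_mx (tridiag_toeplitz n sigma delta tau) ->
  exists Q : 'M[C]_n, ctr Q *m Q = 1%:M /\
    tridiag_toeplitz n sigma delta tau *m Q
    = Q *m diag_mx (\row_(k < n) ttoep_eig n delta s k.+1).
Proof.
move=> st s2 T_normal.
have s0 : s != 0 by apply: contraNneq st => s0; rewrite -s2 s0 expr0n.
have tau0 : tau != 0 by apply: contraNneq st => ->; rewrite mulr0.
apply: (normal_unitary_diag (v := fun k : 'I_n => ttoep_evec s tau n k.+1)) => //.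
- by move=> a b /(ttoep_eig_inj s0 (leqW (ltn_ord a)) (leqW (ltn_ord b))) [/val_inj].
- by move=> k; rewrite ttoep_evec_neq0 ?(leq_ltn_trans _ (ltn_ord k)).
by move=> k; rewrite ttoep_evec_eig.
Qed.

Lemma normal_ttoep_cabs n (sigma delta tau : C) : (2 <= n)%N ->
  normal_mx (tridiag_toeplitz n sigma delta tau) -> cabs sigma = cabs tau.
Proof.
case: n => [|[|n]] // _ /(congr1 (fun M : 'M[C]_n.+2 => M ord0 ord0)).
rewrite !mxE !big_ord_recl !big1 => [|i _|i _]; rewrite ?mxE //= ?mul0r ?mulr0 //.
rewrite !addr0 (mulrC (conjc delta)) (mulrC (conjc sigma)) => /addrI.
by rewrite -!sqr_cabs => /complexI/eqP; rewrite eqrXn2 ?cabs_ge0 // => /eqP.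
Qed.

Lemma ttoep_eig_dist n (delta s : C) a b :
  cabs (ttoep_eig n delta s a - ttoep_eig n delta s b)
  = 2 * cabs s * `|cos (a%:R * pi / n.+1%:R) - cos (b%:R * pi / n.+1%:R)|.
Proof.
rewrite /ttoep_eig opprD addrACA subrr add0r -mulrBr -rmorphB !cabsM cabs_real.
by rewrite -(rmorph_nat (@real_complex R) 2) cabs_real normr_nat.
Qed.

End TridiagToeplitzSpectrum.

Lemma dist_ge_neighbour_gap (R : realDomainType) (c : nat -> R) (N h m : nat) e :
  (forall i j, (i <= j <= N)%N -> c j <= c i) -> (h <= N)%N -> (m <= N)%N -> m != h ->
  ((m < h)%N -> e <= c h.-1 - c h) -> ((h < m)%N -> e <= c h - c h.+1) ->
  e <= `|c h - c m|.
Proof.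
move=> c_noninc hN mN mh left right; case: ltngtP mh => // [mlt|hlt] _.
  rewrite distrC (le_trans (left mlt)) // (le_trans _ (ler_norm _)) // lerD2r.
  by apply: c_noninc; lia.
rewrite (le_trans (right hlt)) // (le_trans _ (ler_norm _)) // lerD2l lerN2.
by apply: c_noninc; rewrite hlt.
Qed.

(* The nearest eigenvalue to [lambda_h] is [lambda_(h-1)] in the first case and
   [lambda_(h+1)] in the second; [2 h -+ 1] indexes the corresponding gap. *)
Definition ttoep_gap_index (n h : nat) : nat :=
  (if ((1 < h) && (2 * h <= n)) || (h == n) then 2 * h - 1 else 2 * h + 1)%N.

Lemma ttoep_gap_index_bounds n h : (2 <= n)%N -> (1 <= h <= n)%N ->
  (3 <= ttoep_gap_index n h)%N && (ttoep_gap_index n h + 3 <= 2 * n.+1)%N.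
Proof. by rewrite /ttoep_gap_index; case: ifP; lia. Qed.

Section CosineGaps.
Variables (R : realType) (n : nat).
Local Notation c m := (cos (m%:R * pi / n.+1%:R) : R).
Local Notation gap k :=
  (2 * sin (pi / (2 * n.+1)%:R) * sin (k%:R * pi / (2 * n.+1)%:R) : R).

Lemma cos_sub_succ m : c m - c m.+1 = gap (2 * m + 1).
Proof.
set a : R := pi / (2 * n.+1)%:R.
have n1_neq0 : 1 + n%:R != 0 :> R by rewrite addrC natr1 pnatr_eq0.
have dbl k : k%:R * pi / n.+1%:R = (2 * k)%:R * a by rewrite /a !natrM; field.
have two_m : (2 * m)%:R = (2 * m + 1)%:R - 1 :> R by rewrite natrD addrK.
have two_mS : (2 * m.+1)%:R = (2 * m + 1)%:R + 1 :> R.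
  by rewrite natr1; congr _%:R; lia.
rewrite !dbl -[(2 * m + 1)%:R * pi / _]mulrA -/a two_m two_mS mulrBl mulrDl mul1r.
by rewrite cosB cosD; ring.
Qed.

Lemma cos_sub_succ_diff m :
  (c m - c m.+1) - (c m.+1 - c m.+2) = 2 * c m.+1 * (cos (pi / n.+1%:R) - 1).
Proof.
set t : R := pi / n.+1%:R.
have n1_neq0 : 1 + n%:R != 0 :> R by rewrite addrC natr1 pnatr_eq0.
have -> : m%:R * pi / n.+1%:R = m.+1%:R * pi / n.+1%:R - t.
  by rewrite /t -[m.+1]addn1 natrD; field.
have -> : m.+2%:R * pi / n.+1%:R = m.+1%:R * pi / n.+1%:R + t.
  by rewrite /t -[m.+2]addn1 natrD; field.
by rewrite cosB cosD; ring.
Qed.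

Lemma cos_min_gap h : (2 <= n)%N -> (1 <= h <= n)%N ->
  (forall m, (1 <= m <= n)%N -> m != h -> gap (ttoep_gap_index n h) <= `|c h - c m|) /\
  exists2 m, (1 <= m <= n)%N && (m != h) & `|c h - c m| = gap (ttoep_gap_index n h).
Proof.
move=> n2 /andP [h1 hn].
have c_noninc i j : (i <= j <= n.+1)%N -> c j <= c i by apply: cos_mulpi_frac_nonincr.
have gap_left : c h.-1 - c h = gap (2 * h - 1).
  by rewrite -(_ : 2 * h.-1 + 1 = 2 * h - 1)%N; [rewrite -cos_sub_succ prednK | lia].
have second_diff := cos_sub_succ_diff h.-1; rewrite prednK // in second_diff.
have cos_t_le1 : cos (pi / n.+1%:R) <= 1 :> R by apply: cos_le1.
have dist_left : `|c h - c h.-1| = c h.-1 - c h.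
  by rewrite distrC ger0_norm // subr_ge0 c_noninc //; lia.
have dist_right : `|c h - c h.+1| = c h - c h.+1.
  by rewrite ger0_norm // subr_ge0 c_noninc //; lia.
rewrite /ttoep_gap_index; case: ifP => [case1|/negbT case2].
  rewrite -gap_left; split; last by exists h.-1; [lia | rewrite dist_left].
  move=> m /andP [m1 mn] mh.
  apply: (dist_ge_neighbour_gap c_noninc (leqW hn) (leqW mn) mh) => // hm.
  have : 0 <= c h by apply: cos_mulpi_frac_ge0; lia.
  by nra.
rewrite -cos_sub_succ; split; last by exists h.+1; [lia | rewrite dist_right].
move=> m /andP [m1 mn] mh.
apply: (dist_ge_neighbour_gap c_noninc (leqW hn) (leqW mn) mh) => // mh'.
have : c h <= 0 by apply: cos_mulpi_frac_le0; lia.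
by nra.
Qed.

End CosineGaps.

Section ConditionNumber.
Variable R : realType.
Local Notation C := R[i].

Lemma kbound_reflect n (sigma : C) k : (k <= 2 * n.+1)%N ->
  kbound n sigma (2 * n.+1 - k) = kbound n sigma k.
Proof. by move=> kn; rewrite /kbound sin_mulpi_frac_reflect. Qed.

Lemma kbound_le3 n (sigma : C) k : sigma != 0 -> (3 <= k)%N -> (k + 3 <= 2 * n.+1)%N ->
  kbound n sigma k <= kbound n sigma 3.
Proof.
move=> sigma0 k3 kn.
have a_gt0 : 0 < sin (pi / (2 * n.+1)%:R) :> R by apply: sin_pi_frac_gt0; lia.
have k_gt0 : 0 < sin (k%:R * pi / (2 * n.+1)%:R) :> R by apply: sin_mulpi_frac_gt0; lia.
have three_gt0 : 0 < sin (3%:R * pi / (2 * n.+1)%:R) :> R.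
  by apply: sin_mulpi_frac_gt0; lia.
rewrite /kbound lef_pV2 ?posrE ?mulr_gt0 ?cabs_gt0 // ler_pM2l ?mulr_gt0 ?cabs_gt0 //.
by apply: sin_mulpi_frac_le; lia.
Qed.

Lemma kappa_ttoep n (sigma delta tau s : C) h (U : 'M[C]_(n, n.-1)) :
  (2 <= n)%N -> sigma * tau != 0 -> s ^+ 2 = sigma * tau ->
  normal_mx (tridiag_toeplitz n sigma delta tau) -> (1 <= h <= n)%N ->
  orthonormal_cols U ->
  same_range U (tridiag_toeplitz n sigma delta tau - (ttoep_eig n delta s h)%:M) ->
  kappa (tridiag_toeplitz n sigma delta tau) (ttoep_eig n delta s h) U
  = kbound n sigma (ttoep_gap_index n h).
Proof.
move=> n2 st s2 T_normal h_range U_orth U_range.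
have [Q [Q_unitary TQ]] := normal_ttoep_unitary_diag st s2 T_normal.
have s0 : s != 0 by apply: contraNneq st => s0; rewrite -s2 s0 expr0n.
have cabs_s : cabs s = cabs sigma.
  apply/eqP; rewrite -(eqrXn2 (ltn0Sn 1)) ?cabs_ge0 // expr2 -cabsM -expr2 s2 cabsM.
  by rewrite -(normal_ttoep_cabs n2 T_normal) expr2.
have [gap_le [m /andP [/andP [m_gt0 mn] mh] gap_eq]] := cos_min_gap R n2 h_range.
have K_bounds := ttoep_gap_index_bounds n2 h_range.
case/andP: h_range => h_gt0 hn.
pose lam (k : 'I_n) := ttoep_eig n delta s k.+1.
have h_lt : (h.-1 < n)%N by rewrite prednK.
have lam_h : ttoep_eig n delta s h = lam (Ordinal h_lt) by rewrite /lam /= prednK.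
rewrite lam_h in U_range *; rewrite /kbound -cabs_s.
set K := ttoep_gap_index n h in gap_le gap_eq K_bounds *.
set a := sin (pi / (2 * n.+1)%:R); set b := sin (K%:R * pi / (2 * n.+1)%:R).
have a_gt0 : 0 < a by apply: sin_pi_frac_gt0; lia.
have b_gt0 : 0 < b by apply: sin_mulpi_frac_gt0; lia.
have -> : 4%:R * cabs s * a * b = 2 * cabs s * (2 * a * b) by ring.
apply: (kappa_normal_min_gap Q_unitary TQ U_orth U_range).
- by rewrite !mulr_gt0 ?cabs_gt0.
- move=> j ji0; rewrite /lam ttoep_eig_dist /= prednK // ler_pM2l ?mulr_gt0 ?cabs_gt0 //.
  apply: gap_le; first by rewrite ltn_ord.
  by apply: contra_neq ji0 => jh; apply: val_inj; rewrite /= -jh.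
have m_lt : (m.-1 < n)%N by rewrite prednK.
exists (Ordinal m_lt); last by rewrite /lam ttoep_eig_dist /= !prednK ?gap_eq.
by apply: contra_neq mh => /(congr1 val) /= mh; rewrite -(prednK h_gt0) -mh prednK.
Qed.

End ConditionNumber.

Theorem proposition5 (R : realType) (n : nat) (sigma delta tau s : R[i]) :
  (2 <= n)%N -> sigma * tau != 0 -> s ^+ 2 = sigma * tau ->
  normal_mx (tridiag_toeplitz n sigma delta tau) ->
  (* explicit formula *)
  (forall (h : nat) (x : 'cV[R[i]]_n) (U : 'M[R[i]]_(n, n.-1)),
     (1 <= h <= n)%N -> vnorm2 x = 1 ->
     tridiag_toeplitz n sigma delta tau *m x = ttoep_eig n delta s h *: x ->
     orthonormal_cols U ->
     same_range U (tridiag_toeplitz n sigma delta tau - (ttoep_eig n delta s h)%:M) ->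
     (((1 < h)%N /\ (2 * h <= n)%N) \/ h = n ->
        kappa (tridiag_toeplitz n sigma delta tau) (ttoep_eig n delta s h) U
        = kbound n sigma (2 * h - 1)) /\
     (h = 1%N \/ ((n < 2 * h)%N /\ (h < n)%N) ->
        kappa (tridiag_toeplitz n sigma delta tau) (ttoep_eig n delta s h) U
        = kbound n sigma (2 * h + 1)) /\
     (* the maximum over h *)
     kappa (tridiag_toeplitz n sigma delta tau) (ttoep_eig n delta s h) U
       <= kbound n sigma 3 /\
     (h \in [:: 1; 2; n.-1; n]%N ->
        kappa (tridiag_toeplitz n sigma delta tau) (ttoep_eig n delta s h) U
        = kbound n sigma 3)).
Proof.
(* [kappa] only depends on [U]. *)
move=> n2 st s2 T_normal h x U h_range _ _ U_orth U_range.
have sigma0 : sigma != 0 by apply: contraNneq st => ->; rewrite mul0r.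
rewrite (kappa_ttoep n2 st s2 T_normal h_range U_orth U_range).
have /andP [K_ge3 K_le] := ttoep_gap_index_bounds n2 h_range.
split; [|split; [|split]].
- by rewrite /ttoep_gap_index; case: ifP => //; lia.
- by rewrite /ttoep_gap_index; case: ifP => //; lia.
- exact: kbound_le3.
rewrite !inE => h_extreme.
have [->//|->] : ttoep_gap_index n h = 3 \/ ttoep_gap_index n h = (2 * n.+1 - 3)%N.
  by rewrite /ttoep_gap_index; case: ifP; lia.
by rewrite kbound_reflect //; lia.
Qed.
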